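(* Let $\mathfrak h\in\mathrm{Mult}_\rho$, let $\Delta$ be a segment admissible to $\mathfrak h$, and let $\Delta'$ be a segment linked to $\Delta$ with $\Delta'>\Delta$. The following are equivalent: (1) $(\Delta,\Delta',\mathfrak h)$ satisfies the non-overlapping property; (2) $\eta_{\Delta'}(\mathfrak h)=\eta_{\Delta'}(\mathfrak r(\Delta,\mathfrak h))$; (3) $(\Delta,\Delta',\mathfrak h)$ satisfies the intermediate segment property.
   Context: Segments: for integers $a\le b$, $[a,b]_\rho$ (think of the integer interval $\{a,\dots,b\}$), with $a(\Delta)=a$, $b(\Delta)=b$, and inclusion of segments as intervals. Two segments are linked if their union is a segment (an interval) and neither contains the other; for linked $\Delta,\Delta'$ write $\Delta<\Delta'$ (or $\Delta'>\Delta$) if $b(\Delta)<b(\Delta')$. A multisegment is a finite multiset of nonempty segments; $\mathrm{Mult}_\rho$ is the set of multisegments; $+$, $-$ are multiset sum and difference (adding an empty segment does nothing); $\mathfrak h[c]$ is the submultisegment of segments of $\mathfrak h$ starting at $c$. Write $[x,y]_\rho\prec^L[x',y']_\rho$ if $x<x'$, or $x=x'$ and $y<y'$. A segment $\Delta=[a,b]_\rho$ is admissible to $\mathfrak h$ if $\mathfrak h$ contains a segment $[a,c]_\rho$ with $c\ge b$. Removal process: for $\Delta=[a,b]_\rho$ admissible to $\mathfrak h$, let $\Delta_1=[a_1,b_1]_\rho$ be a shortest segment of $\mathfrak h$ with $a_1=a$ and $b_1\ge b$; recursively, let $\Delta_i=[a_i,b_i]_\rho$ be the $\prec^L$-minimal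 segment of $\mathfrak h$ with $a_{i-1}<a_i$ and $b\le b_i<b_{i-1}$, stopping when none exists; $\Delta_1,\dots,\Delta_r$ is the removal sequence for $(\Delta,\mathfrak h)$. Put $\Delta_i^{tr}=[a_{i+1},b_i]_\rho$ for $i<r$ and $\Delta_r^{tr}=[b+1,b_r]_\rho$ (possibly empty), and $\mathfrak r(\Delta,\mathfrak h)=\mathfrak h-\sum_i\Delta_i+\sum_i\Delta_i^{tr}$. For a segment $\Delta=[a,b]_\rho$, $\varepsilon_\Delta(\mathfrak h)=|\{\widetilde\Delta\in\mathfrak h[a]:\Delta\subset\widetilde\Delta\}|$ (with multiplicity), and $\eta_\Delta(\mathfrak h)=(\varepsilon_{[a,b]_\rho}(\mathfrak h),\varepsilon_{[a+1,b]_\rho}(\mathfrak h),\dots,\varepsilon_{[b,b]_\rho}(\mathfrak h))$. Non-overlapping property: the triple $(\Delta,\Delta',\mathfrak h)$ satisfies it if, for the shortest segment $\overline\Delta$ in the removal sequence for $(\Delta,\mathfrak h)$ that contains the point $a(\Delta')-1$, one has $\Delta'\not\subset\overline\Delta$. Intermediate segment property: the triple $(\Delta,\Delta',\mathfrak h)$ satisfies it if there is $\widetilde\Delta\in\mathfrak h$ with $a(\Delta)\le a(\widetilde\Delta)<a(\Delta')$ and $b(\Delta)\le b(\widetilde\Delta)<b(\Delta')$. *)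

(* Segments [a,b]_rho are encoded by pairs of integers (a,b);
   multisegments by finite sequences of segments (multisets up to order). *)
From mathcomp Require Import all_boot all_order all_algebra.
Set Implicit Arguments. Unset Strict Implicit. Unset Printing Implicit Defensive.
Import Order.TTheory GRing.Theory Num.Theory.
Local Open Scope ring_scope.

Definition seg := (int * int)%type.
Definition sa (s : seg) : int := s.1.
Definition sb (s : seg) : int := s.2.

Definition seg_ne (s : seg) : bool := sa s <= sb s.
Definition is_mult (h : seq seg) : bool := all seg_ne h.

Definition subseg (x y : seg) : bool := (sa y <= sa x) && (sb x <= sb y).

Definition linked (x y : seg) : bool :=
  [&& sa y <= sb x + 1, sa x <= sb y + 1, ~~ subseg x y & ~~ subseg y x].

Definition precL (s t : seg) : bool := (sa s < sa t) || ((sa s == sa t) && (sb s < sb t)).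

Definition admissible (D : seg) (h : seq seg) : bool :=
  has (fun s => (sa s == sa D) && (sb D <= sb s)) h.

Fixpoint argmin_by (lt : rel seg) (l : seq seg) : option seg :=
  match l with
  | [::] => None
  | x :: l' => match argmin_by lt l' with
               | None => Some x
               | Some y => if lt y x then Some y else Some x
               end
  end.

Definition seg_len (s : seg) : int := sb s - sa s.
Definition shorter (s t : seg) : bool := seg_len s < seg_len t.

Fixpoint rem_chain (n : nat) (D : seg) (h : seq seg) (p : seg) : seq seg :=
  match n with
  | 0 => [::]
  | n'.+1 =>
    match argmin_by precL
            [seq s <- h | [&& sa p < sa s, sb D <= sb s & sb s < sb p]] with
    | None => [::]
    | Some s => s :: rem_chain n' D h s
    end
  end.

(* removal sequence Delta_1, ..., Delta_r for (D, h); the fuel size h is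
   sufficient since the b_i strictly decrease and all Delta_i lie in h *)
Definition removal_seq (D : seg) (h : seq seg) : seq seg :=
  match argmin_by shorter [seq s <- h | (sa s == sa D) && (sb D <= sb s)] with
  | None => [::]
  | Some d1 => d1 :: rem_chain (size h) D h d1
  end.

Fixpoint truncs (D : seg) (l : seq seg) : seq seg :=
  match l with
  | [::] => [::]
  | [:: d] => [:: (sb D + 1, sb d)]
  | d :: ((d' :: _) as l') => (sa d', sb d) :: truncs D l'
  end.

Definition removal (D : seg) (h : seq seg) : seq seg :=
  let l := removal_seq D h in
  foldl (fun acc d => rem d acc) h l ++ filter seg_ne (truncs D l).

Definition eps (D : seg) (h : seq seg) : nat :=
  count (fun s => (sa s == sa D) && subseg D s) h.

Definition eta (D : seg) (h : seq seg) : seq nat :=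
  [seq eps (sa D + (i%:Z), sb D) h | i <- iota 0 (`|sb D - sa D|%N.+1)].

Definition non_overlapping (D D' : seg) (h : seq seg) : bool :=
  match argmin_by shorter
          [seq s <- removal_seq D h | (sa s <= sa D' - 1) && (sa D' - 1 <= sb s)] with
  | Some Dbar => ~~ subseg D' Dbar
  | None => false
  end.

Definition intermediate_seg (D D' : seg) (h : seq seg) : bool :=
  has (fun s => [&& sa D <= sa s, sa s < sa D', sb D <= sb s & sb s < sb D']) h.

From mathcomp Require Import all_boot all_order all_algebra zify.
Import Order.TTheory GRing.Theory Num.Theory.
Local Open Scope ring_scope.
Set Implicit Arguments. Unset Strict Implicit. Unset Printing Implicit Defensive.

(* The removal sequence Delta_1, ..., Delta_r is a chain of strictly nested
   segments (starts increasing, ends decreasing), and all three conditions turn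
   out to be equivalent to: some Delta_i starts before a(Delta') and ends before
   b(Delta').  For (1), the shortest Delta_i containing a(Delta') - 1 is the
   innermost one starting before a(Delta').  For (3), an intermediate segment is
   either dominated by Delta_1 or is a candidate successor of Delta_1, and the
   <^L-minimal choice of successors makes every candidate dominated by a later
   Delta_i.  For (2), r(Delta, h) exchanges the chain for its truncations; when
   some Delta_i precedes Delta', neither contributes to eps_[x, b(Delta')] for
   x >= a(Delta'), and otherwise the first Delta_i ending before b(Delta') gives
   a point x = a(Delta_i) where the truncations contribute strictly more. *)

Lemma argmin_by_None (lt : rel seg) l : argmin_by lt l = None -> l = [::].
Proof. by case: l => //= x l; case: argmin_by => // y; case: ifP. Qed.

Section ArgMin.

Variable lt : rel seg.
Hypothesis lt_asym : forall x y, lt x y -> ~~ lt y x.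
Hypothesis lt_negtrans : forall x y z, lt z x -> ~~ lt y x -> lt z y.

Lemma argmin_byP l m :
  argmin_by lt l = Some m -> m \in l /\ {in l, forall y, ~~ lt y m}.
Proof.
have lt_irr x : ~~ lt x x by apply/negP => xx; move: (lt_asym xx); rewrite xx.
elim: l m => [|x l IH] m //=.
case E: (argmin_by lt l) => [y|]; last first.
  by move=> [<-]; rewrite (argmin_by_None E) mem_head; split=> // z /[!inE] /eqP->.
have [yl y_min] := IH _ E.
case: ifP => yx [<-]; split; rewrite ?inE ?yl ?eqxx ?orbT //.
  by move=> z /[!inE] /orP[/eqP->|zl]; [exact: lt_asym | exact: y_min].
move=> z /[!inE] /orP[/eqP->//|zl]; apply/negP => zx.
by move/negP: (y_min z zl); apply; apply: lt_negtrans zx (negbT yx).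
Qed.

End ArgMin.

Lemma precL_asym x y : precL x y -> ~~ precL y x.
Proof. rewrite /precL; lia. Qed.

Lemma precL_negtrans x y z : precL z x -> ~~ precL y x -> precL z y.
Proof. rewrite /precL; lia. Qed.

Lemma shorter_asym x y : shorter x y -> ~~ shorter y x.
Proof. rewrite /shorter /seg_len; lia. Qed.

Lemma shorter_negtrans x y z : shorter z x -> ~~ shorter y x -> shorter z y.
Proof. rewrite /shorter /seg_len; lia. Qed.

Lemma count_lt_subpred (T : eqType) (P Q : pred T) s x :
  subpred P Q -> x \in s -> Q x -> ~~ P x -> (count P s < count Q s)%N.
Proof.
move=> sPQ; elim: s => //= y s IH /[!inE] /orP[/eqP<- Qx Px|xs Qx Px].
  by rewrite Qx (negbTE Px) add0n add1n ltnS sub_count.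
have lt_s := IH xs Qx Px; case Py: (P y); first by rewrite (sPQ _ Py) ltn_add2l.
by rewrite add0n (leq_trans lt_s) ?leq_addl.
Qed.

Lemma count_foldl_rem (T : eqType) (P : pred T) (l s : seq T) :
  uniq l -> {subset l <= s} ->
  (count P (foldl (fun acc d => rem d acc) s l) + count P l = count P s)%N.
Proof.
elim: l s => [|x l IH] s /=; first by rewrite addn0.
move=> /andP[xl ul] ls; have xs : x \in s by rewrite ls ?mem_head.
have s_x := perm_to_rem xs.
have lsx : {subset l <= rem x s}.
  move=> y yl; have /ls : y \in x :: l by rewrite inE yl orbT.
  rewrite (perm_mem s_x) inE.
  by case/orP=> // /eqP yx; move: xl; rewrite -yx yl.
by rewrite addnCA IH // (permP s_x).
Qed.

Lemma path_all_next (T : Type) (e : rel T) (Q : pred T) x s :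
  (forall u v, e u v -> Q v) -> path e x s -> all Q s.
Proof.
move=> eQ; elim: s x => //= y s IH x /andP[xy ys].
by rewrite (eQ _ _ xy) (IH y ys).
Qed.

Definition next_cand (b : int) (u s : seg) : bool :=
  [&& sa u < sa s, b <= sb s & sb s < sb u].

Definition removal_step (b : int) (h : seq seg) (u v : seg) : bool :=
  [&& v \in h, next_cand b u v & all (fun s => next_cand b u s ==> ~~ precL s v) h].

Lemma rem_chain_path n D h p : path (removal_step (sb D) h) p (rem_chain n D h p).
Proof.
elim: n p => [|n IH] p //=.
case E: argmin_by => [s|] //=; rewrite IH andbT.
have [sF s_min] := argmin_byP precL_asym precL_negtrans E.
move: sF; rewrite mem_filter => /andP[ps sh].
rewrite /removal_step sh /next_cand ps /=; apply/allP => y yh; apply/implyP => py.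
by apply: s_min; rewrite mem_filter yh andbT.
Qed.

Lemma rem_chain_stuck n D h p :
  leq (count (fun s => (sb D <= sb s) && (sb s < sb p)) h) n ->
  ~~ has (next_cand (sb D) (last p (rem_chain n D h p))) h.
Proof.
elim: n p => [|n IH] p /= count_le.
  rewrite has_count -leqNgt (leq_trans _ count_le) // sub_count // => y.
  by case/and3P=> _ -> ->.
case E: argmin_by => [s|] /=; last by rewrite has_filter (argmin_by_None E) eqxx.
have [sF _] := argmin_byP precL_asym precL_negtrans E.
move: sF; rewrite mem_filter => /andP[ps sh].
apply: IH; rewrite -ltnS (leq_trans _ count_le) // (count_lt_subpred _ sh) //=.
- by move=> y /andP[-> ys]; move: ps; rewrite /next_cand; lia.
- by case/and3P: ps => _ -> ->.
- by rewrite ltxx andbF.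
Qed.

Record removal_chain (D : seg) (h : seq seg) (d1 : seg) (t : seq seg) : Prop :=
  RemovalChain {
    removal_seq_eq : removal_seq D h = d1 :: t;
    first_in : d1 \in h;
    first_start : sa d1 = sa D;
    first_end : sb D <= sb d1;
    first_shortest :
      forall s, s \in h -> sa s = sa D -> sb D <= sb s -> ~~ shorter s d1;
    chain_steps : path (removal_step (sb D) h) d1 t;
    chain_stuck : ~~ has (next_cand (sb D) (last d1 t)) h }.

Lemma removal_chain_exists D h : admissible D h -> exists d1 t, removal_chain D h d1 t.
Proof.
rewrite /admissible => adm.
case E: (argmin_by shorter [seq s <- h | (sa s == sa D) && (sb D <= sb s)]) => [d1|];
  last by move: adm; rewrite has_filter (argmin_by_None E).
have [d1F d1_min] := argmin_byP shorter_asym shorter_negtrans E.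
move: d1F; rewrite mem_filter => /andP[/andP[/eqP d1a d1b] d1h].
exists d1, (rem_chain (size h) D h d1); split=> //; first by rewrite /removal_seq E.
- by move=> s sh sa_s sb_s; apply: d1_min; rewrite mem_filter sa_s sb_s sh eqxx.
- exact: rem_chain_path.
- exact: rem_chain_stuck (count_size _ h).
Qed.

Definition encloses (u v : seg) : bool := (sa u < sa v) && (sb v < sb u).

Definition precedes (u v : seg) : bool := (sa u < sa v) && (sb u < sb v).

Lemma encloses_trans : transitive encloses.
Proof. move=> y x z; rewrite /encloses; lia. Qed.

Lemma encloses_path_total p t : path encloses p t ->
  {in p :: t &, forall u v, [|| u == v, encloses u v | encloses v u]}.
Proof.
elim: t p => [|q t IH] p.
  by move=> _ u v /[!inE] /eqP-> /eqP->; rewrite eqxx.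
move=> pqt; have /allP p_min := order_path_min encloses_trans pqt.
case/andP: pqt => _ qt u v /[!in_cons] /orP[/eqP->|ut] /orP[/eqP->|vt].
- by rewrite eqxx.
- by rewrite p_min ?orbT.
- by rewrite p_min ?orbT.
- exact: IH qt u v ut vt.
Qed.

Lemma removal_path_covers b h p t s :
  path (removal_step b h) p t -> ~~ has (next_cand b (last p t)) h ->
  s \in h -> next_cand b p s ->
  exists2 u, u \in t & (sa u <= sa s) && (sb u <= sb s).
Proof.
elim: t p => [|q t IH] p /= => [_ stuck sh ps | /andP[pq qt] stuck sh ps].
  by move/hasPn: stuck => /(_ s sh); rewrite ps.
case/and3P: pq => _ pq /allP/(_ s sh); rewrite ps /= => not_s_q.
have [qs | sq] := leP (sb q) (sb s).
  by exists q; rewrite ?mem_head //; move: not_s_q; rewrite /precL; lia.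
have qs : next_cand b q s by move: not_s_q ps pq; rewrite /next_cand /precL; lia.
by have [u ut us] := IH q qt stuck sh qs; exists u; rewrite ?inE ?ut ?orbT.
Qed.

Lemma eps_cons E s l : eps E (s :: l) = ((sa s == sa E) && subseg E s + eps E l)%N.
Proof. by []. Qed.

Lemma eps_eq0 E l :
  {in l, forall s, (sa s < sa E) || (sb s < sb E)} -> eps E l = 0%N.
Proof.
move=> out; apply/eqP; rewrite eqn0Ngt -has_count; apply/hasPn => s /out.
by rewrite /subseg; lia.
Qed.

Lemma truncs_cons2 D p q t :
  truncs D [:: p, q & t] = (sa q, sb p) :: truncs D (q :: t).
Proof. by []. Qed.

Lemma truncs_end D p t :
  path encloses p t -> {in truncs D (p :: t), forall s, sb s <= sb p}.
Proof.
elim: t p => [|q t IH] p; first by move=> _ s /[!inE] /eqP->.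
move=> /andP[pq qt] s; rewrite truncs_cons2 inE => /orP[/eqP-> //|st].
by have := IH q qt s st; move: pq; rewrite /encloses; lia.
Qed.

Lemma truncs_around D p t u : path encloses p t -> u \in p :: t ->
  {in truncs D (p :: t), forall s, (sa s <= sa u) || (sb s <= sb u)}.
Proof.
elim: t p => [|q t IH] p.
  by move=> _ /[!inE] /eqP-> s /[!inE] /eqP->; rewrite lexx orbT.
move=> /andP[pq qt]; rewrite in_cons => /orP[/eqP->|ut] s; rewrite truncs_cons2 inE.
  case/orP=> [/eqP-> | st]; first by rewrite lexx orbT.
  by have := truncs_end qt st; move: pq; rewrite /encloses; lia.
case/orP=> [/eqP-> /= | st]; last exact: IH qt ut s st.
move: ut; rewrite inE => /orP[/eqP-> | ut]; first by rewrite lexx.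
by have /allP/(_ u ut) := order_path_min encloses_trans qt; rewrite /encloses; lia.
Qed.

Lemma eps_chain_truncs_eq0 D E p t : path encloses p t -> has (precedes^~ E) (p :: t) ->
  eps E t = 0%N /\ eps E (truncs D (p :: t)) = 0%N.
Proof.
move=> pt /hasP[u ut uE]; split; apply: eps_eq0 => s st.
  have := encloses_path_total pt ut (mem_behead (s := p :: t) st).
  by case/or3P=> [/eqP<-||]; move: uE; rewrite /encloses /precedes; lia.
by have := truncs_around pt ut st; move: uE; rewrite /precedes; lia.
Qed.

Lemma eps_truncs_ge D E p t : path encloses p t ->
  (eps E t <= eps E (truncs D (p :: t)))%N.
Proof.
elim: t p => [|q t IH] p // /andP[pq qt].
rewrite truncs_cons2 !eps_cons; apply: leq_add; last exact: IH.
by move: pq; rewrite /encloses /subseg /=; lia.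
Qed.

(* Follow the chain while its segments end at or after [sb E]; the first one
   that ends before starts at some [x >= sa E], and its truncated predecessor
   [(x, _)] covers [(x, sb E)] while it does not. *)
Lemma eps_truncs_gt D E p t : path encloses p t -> all seg_ne t ->
  sb E <= sb p -> ~~ has (precedes^~ E) t ->
  sa E <= sb D + 1 -> sb D + 1 <= sb E ->
  exists2 x, sa E <= x <= sb E & (eps (x, sb E) t < eps (x, sb E) (truncs D (p :: t)))%N.
Proof.
elim: t p => [|q t IH] p.
  move=> _ _ Ep _ EaD EbD; exists (sb D + 1); first by lia.
  by rewrite /eps /subseg /=; lia.
move=> /andP[pq qt] /andP[ne_q ne_t] Ep /norP[qE tE] EaD EbD.
have [Eq | qE'] := leP (sb E) (sb q).
  have [x xE lt_x] := IH q qt ne_t Eq tE EaD EbD; exists x => //.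
  rewrite truncs_cons2 !eps_cons -addnS; apply: leq_add => //.
  by move: pq; rewrite /encloses /subseg /=; lia.
exists (sa q); first by move: qE ne_q; rewrite /precedes /seg_ne; lia.
have [q_out trunc_in] : subseg (sa q, sb E) q = false /\ subseg (sa q, sb E) (sa q, sb p).
  by move: pq; rewrite /encloses /subseg /=; split; lia.
by rewrite truncs_cons2 !eps_cons q_out trunc_in andbF eqxx add0n add1n ltnS eps_truncs_ge.
Qed.

Lemma eta_eqP E l1 l2 : seg_ne E ->
  eta E l1 = eta E l2 <->
  (forall x, sa E <= x <= sb E -> eps (x, sb E) l1 = eps (x, sb E) l2).
Proof.
rewrite /seg_ne /eta => neE; split => [/eq_in_map eq_eps x xE | eq_eps].
  have i_in : `|x - sa E|%N \in iota 0 `|sb E - sa E|.+1 by rewrite mem_iota; lia.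
  by have := eq_eps _ i_in; rewrite /= (_ : sa E + _ = x) //; lia.
by apply/eq_in_map => i; rewrite mem_iota => i_lt; apply: eq_eps; lia.
Qed.

Lemma eps_removal D h E :
  uniq (removal_seq D h) -> {subset removal_seq D h <= h} -> seg_ne E ->
  (eps E (removal D h) + eps E (removal_seq D h) =
   eps E h + eps E (truncs D (removal_seq D h)))%N.
Proof.
move=> uniq_l sub_l neE.
rewrite /removal /eps count_cat count_filter addnAC count_foldl_rem //.
congr (_ + _)%N; apply: eq_count => s /=; move: neE; rewrite /seg_ne /subseg; lia.
Qed.

Section RemovalChain.

Variables (D : seg) (h : seq seg) (d1 : seg) (t : seq seg).
Hypothesis rc : removal_chain D h d1 t.

Lemma removal_chain_encloses : path encloses d1 t.
Proof.
apply: sub_path (chain_steps rc) => u v /and3P[_ + _].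
by rewrite /next_cand /encloses; lia.
Qed.

Lemma removal_chain_bounds (u : seg) :
  u \in d1 :: t -> [/\ u \in h, sa D <= sa u & sb D <= sb u].
Proof.
have /allP t_in_h : all (fun v => (v \in h) && (sb D <= sb v)) t.
  by apply: path_all_next (chain_steps rc) => w v /and3P[-> + _]; rewrite /next_cand; lia.
have /allP d1_enc := order_path_min encloses_trans removal_chain_encloses.
rewrite inE => /orP[/eqP-> | ut].
  by rewrite (first_in rc) (first_start rc) (first_end rc).
case/andP: (t_in_h u ut) => -> ->; split=> //.
by have := d1_enc u ut; rewrite /encloses (first_start rc); lia.
Qed.

Lemma removal_chain_sub : {subset d1 :: t <= h}.
Proof. by move=> u /removal_chain_bounds[]. Qed.

Lemma removal_chain_uniq : uniq (d1 :: t).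
Proof.
have enc_irr : irreflexive encloses by move=> x; rewrite /encloses; lia.
exact: (@sorted_uniq _ _ encloses_trans enc_irr (d1 :: t) removal_chain_encloses).
Qed.

Variable D' : seg.
Hypotheses (aD_lt : sa D < sa D') (aD'_le : sa D' <= sb D + 1).

Lemma non_overlapping_chain : non_overlapping D D' h = has (precedes^~ D') (d1 :: t).
Proof.
rewrite /non_overlapping (removal_seq_eq rc).
case E: argmin_by => [m|]; last first.
  apply/esym/hasP => -[s st sD']; have [_ _ bs] := removal_chain_bounds st.
  have : s \in [seq s <- d1 :: t | (sa s <= sa D' - 1) && (sa D' - 1 <= sb s)].
    by rewrite mem_filter st andbT; move: sD'; rewrite /precedes; lia.
  by rewrite (argmin_by_None E).
have [mF m_min] := argmin_byP shorter_asym shorter_negtrans E.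
move: mF; rewrite mem_filter => /andP[mD' mt].
apply/idP/hasP => [mD'_out | [s st sD']].
  by exists m => //; move: mD'_out mD'; rewrite /subseg /precedes; lia.
have [_ _ bs] := removal_chain_bounds st.
have := m_min s; rewrite mem_filter st andbT.
have := encloses_path_total removal_chain_encloses mt st.
move: sD' mD'; rewrite /precedes /shorter /seg_len /subseg /encloses => sD' mD'.
by case/or3P=> [/eqP ms | |]; [subst m | |]; lia.
Qed.

Lemma intermediate_seg_chain : intermediate_seg D D' h = has (precedes^~ D') (d1 :: t).
Proof.
apply/hasP/hasP => [[s sh /and4P[as_ls sa_lt bs_ls sb_lt]] | [s st sD']]; last first.
  have [sh as_ls bs_ls] := removal_chain_bounds st.
  by exists s => //; move: sD'; rewrite /precedes; lia.
have [d1_s | s_d1] := leP (sb d1) (sb s).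
  by exists d1; rewrite ?mem_head // /precedes (first_start rc); lia.
have [sa_eq | sa_ne] := eqVneq (sa s) (sa D).
  have := first_shortest rc sh sa_eq bs_ls.
  by rewrite /shorter /seg_len (first_start rc); lia.
have d1_s : next_cand (sb D) d1 s by rewrite /next_cand (first_start rc); lia.
have [u ut us] := removal_path_covers (chain_steps rc) (chain_stuck rc) sh d1_s.
by exists u; rewrite ?inE ?ut ?orbT //; move: us; rewrite /precedes; lia.
Qed.

Hypotheses (h_mult : is_mult h) (neD' : seg_ne D') (bD_lt : sb D < sb D').

Lemma eta_removal_chain :
  eta D' h = eta D' (removal D h) <-> has (precedes^~ D') (d1 :: t).
Proof.
have eps_chain x : sa D' <= x <= sb D' ->
    eps (x, sb D') h = eps (x, sb D') (removal D h) <->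
    eps (x, sb D') t = eps (x, sb D') (truncs D (d1 :: t)).
  move=> xD'; have := @eps_removal D h (x, sb D').
  rewrite (removal_seq_eq rc) eps_cons /subseg (first_start rc) /=.
  have ne_x : seg_ne (x, sb D') by rewrite /seg_ne /=; lia.
  move=> /(_ removal_chain_uniq removal_chain_sub ne_x).
  by split; lia.
rewrite eta_eqP //; split=> [eq_eps | d1tD' x xD']; last first.
  apply/eps_chain => //.
  have d1tx : has (precedes^~ (x, sb D')) (d1 :: t).
    by apply: sub_has d1tD' => u; rewrite /precedes /=; lia.
  by have [-> ->] := eps_chain_truncs_eq0 D removal_chain_encloses d1tx.
apply/negPn/negP => /norP[d1D' tD'].
have t_ne : all seg_ne t.
  by apply/allP => u ut; apply: (allP h_mult); rewrite removal_chain_sub // inE ut orbT.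
have bD'_d1 : sb D' <= sb d1 by move: d1D'; rewrite /precedes (first_start rc); lia.
have bD1 : sb D + 1 <= sb D' by lia.
have [x xD' lt_x] := eps_truncs_gt removal_chain_encloses t_ne bD'_d1 tD' aD'_le bD1.
by move: (eq_eps x xD') => /(eps_chain x xD'); lia.
Qed.

End RemovalChain.

Lemma linked_starts D D' : seg_ne D -> seg_ne D' -> linked D D' -> sb D < sb D' ->
  sa D < sa D' /\ sa D' <= sb D + 1.
Proof. rewrite /seg_ne /linked /subseg; lia. Qed.

Theorem mainTheorem17 (h : seq seg) (D D' : seg) :
  is_mult h -> seg_ne D -> seg_ne D' ->
  admissible D h -> linked D D' -> sb D < sb D' ->
  [<-> non_overlapping D D' h;
       eta D' h = eta D' (removal D h);
       intermediate_seg D D' h].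
Proof.
move=> h_mult neD neD' adm lnk bD_lt.
have [aD_lt aD'_le] := linked_starts neD neD' lnk bD_lt.
have [d1 [t rc]] := removal_chain_exists adm.
have ENO := non_overlapping_chain rc aD_lt aD'_le.
have EIS := intermediate_seg_chain rc aD_lt aD'_le.
have EETA := eta_removal_chain rc aD_lt aD'_le h_mult neD' bD_lt.
rewrite ENO EIS.
by split=> [/EETA //|]; split=> [/EETA|].
Qed.
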